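(* For all processes $s,t$ of a PTS over $A_\tau$, the weak trace metric equals the $\mathcal{L}^{\mathrm{w}}$-distance: $\mathbf{d}^{\mathrm{w}}(s,t)=D_{\mathcal{L}^{\mathrm{w}}}(s,t)$.
   Context: PTS $(\mathcal{S},A_\tau,\to)$ with $A_\tau=A\cup\{\tau\}$, finitely supported distributions; processes image-finite and finite. Computations $c=s_0\xrightarrow{a_1}\cdots\xrightarrow{a_n}s_n$ via transitions $s_{i-1}\xrightarrow{a_i}\pi_i$, $s_i\in\mathrm{supp}(\pi_i)$; $\Pr(c)=\prod\pi_i(s_i)$; $|c|=n$; $\mathrm{tr}(c)=a_1\cdots a_n\in A_\tau^\star$; maximal = not a proper prefix of another computation from the same process; $\mathcal{C}_{\max}(z)$, $\mathcal{C}_{\max}(z,\alpha)$ those with trace $\alpha$. A resolution of $s$ is a PTS $\mathcal{Z}=(Z,A_\tau,\to_{\mathcal{Z}})$ with $\mathrm{corr}\colon Z\to\mathcal{S}$ and initial state $z_s$, $\mathrm{corr}(z_s)=s$, such that $z_s$ is in no target support, every other state is in the support of a target of a transition from a different state, every $z\xrightarrow{a}_{\mathcal{Z}}\pi$ is matched by $\mathrm{corr}(z)\xrightarrow{a}\pi'$ with $\pi(z')=\pi'(\mathrm{corr}(z'))$, and each state has at most one outgoing transition; $\mathrm{res}(s)$ the set of resolutions. $TD_{\mathcal{Z}}(\alpha)=\Pr(\mathcal{C}_{\max}(z,\alpha))$, $\alpha\in A_\tau^\star$. Words $\alpha\equiv\beta$ iff they coincide after deleting all $\tau$'s. Kantorovich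 lifting $\mathcal{K}(d)(\pi,\pi')=\min_\omega\sum\omega(x,y)d(x,y)$ over couplings; Hausdorff lifting $\mathcal{H}(\hat d)(X,Y)=\max\{\sup_{x\in X}\inf_{y\in Y}\hat d(x,y),\sup_{y\in Y}\inf_{x\in X}\hat d(y,x)\}$ ($\inf\emptyset=1$, $\sup\emptyset=0$). $d_{\mathrm{w}}(\alpha,\beta)=0$ if $\alpha\equiv\beta$ else $1$; $D_{\mathrm{w}}(\mathcal{Z}_1,\mathcal{Z}_2)=\mathcal{K}(d_{\mathrm{w}})(TD_{\mathcal{Z}_1},TD_{\mathcal{Z}_2})$; $\mathbf{d}^{\mathrm{w}}(s,t)=\mathcal{H}(D_{\mathrm{w}})(\mathrm{res}(s),\mathrm{res}(t))$. Logic $\mathcal{L}^{\mathrm{w}}$: trace formulae $\Phi::=\top\mid\langle a\rangle\Phi$ with $a\in A_\tau$ (each is $\Phi_\alpha$ for a unique $\alpha$, $\Phi_\varepsilon=\top$, $\Phi_{a\alpha}=\langle a\rangle\Phi_\alpha$), $\mathrm{depth}(\Phi_\alpha)=|\alpha|$; trace distribution formulae $\bigoplus_{i\in I}r_i\Phi_i$ ($I$ finite nonempty, $\Phi_i$ pairwise distinct, $r_i\in(0,1]$, $\sum r_i=1$), identified with distributions on trace formulae. $c\models\top$ always; $c\models\langle a\rangle\Phi$ iff $c=s\xrightarrow{a}c'$ with $c'\models\Phi$. $s\models\bigoplus_i r_i\Phi_i$ iff some $\mathcal{Z}\in\mathrm{res}(s)$ with initial state $z$ satisfies $\Pr(\{c\in\mathcal{C}_{\max}(z):c\models\Phi_i,|c|=\mathrm{depth}(\Phi_i)\})=r_i$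 for all $i$; $\mathcal{L}^{\mathrm{w}}(s)$ the set of formulae satisfied by $s$. $d^{\mathrm{w}}(\Phi_\alpha,\Phi_\beta)=0$ if $\alpha\equiv\beta$ else $1$; $D^{\mathrm{w}}=\mathcal{K}(d^{\mathrm{w}})$ on trace distribution formulae; $D_{\mathcal{L}^{\mathrm{w}}}(s,t)=\mathcal{H}(D^{\mathrm{w}})(\mathcal{L}^{\mathrm{w}}(s),\mathcal{L}^{\mathrm{w}}(t))$. *)

From Stdlib Require Import Reals List Classical ClassicalEpsilon.
Import ListNotations.
Open Scope R_scope.

Set Implicit Arguments.

Fixpoint lsum {X : Type} (l : list X) (f : X -> R) : R :=
  match l with [] => 0 | x :: l' => f x + lsum l' f end.

Definition finset {X : Type} (P : X -> Prop) : Prop :=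
  exists l : list X, NoDup l /\ forall x, P x <-> In x l.

(* sum of f over the finite set P (0 if P is not finite; never used then) *)
Definition finsum {X : Type} (P : X -> Prop) (f : X -> R) : R :=
  match excluded_middle_informative (finset P) with
  | left H => lsum (proj1_sig (constructive_indefinite_description _ H)) f
  | right _ => 0
  end.

(* sup of a set of reals, with the convention sup emptyset = 0 *)
Definition supR (E : R -> Prop) : R :=
  match excluded_middle_informative (exists x, E x) with
  | left _ => epsilon (inhabits 0) (fun l => is_lub E l)
  | right _ => 0
  end.

(* inf of a set of reals, with the convention inf emptyset = 1 *)
Definition infR (E : R -> Prop) : R :=
  match excluded_middle_informative (exists x, E x) with
  | left _ => - epsilon (inhabits 0) (fun l => is_lub (fun x => E (- x)) l)
  | right _ => 1
  end.

Definition minR (E : R -> Prop) : R :=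
  epsilon (inhabits 0) (fun r => E r /\ forall r', E r' -> r <= r').

Definition supover {T : Type} (X : T -> Prop) (f : T -> R) : R :=
  supR (fun r => exists x, X x /\ r = f x).
Definition infover {T : Type} (X : T -> Prop) (f : T -> R) : R :=
  infR (fun r => exists x, X x /\ r = f x).

Definition supp {X : Type} (pi : X -> R) (x : X) : Prop := 0 < pi x.

Definition is_fdist {X : Type} (pi : X -> R) : Prop :=
  (forall x, 0 <= pi x) /\
  finset (fun x => pi x <> 0) /\
  finsum (fun x => pi x <> 0) pi = 1.

Definition coupling {X Y : Type} (pi : X -> R) (pi' : Y -> R)
    (w : X * Y -> R) : Prop :=
  (forall p, 0 <= w p) /\
  finset (fun p => w p <> 0) /\
  (forall x, finsum (fun y => w (x, y) <> 0) (fun y => w (x, y)) = pi x) /\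
  (forall y, finsum (fun x => w (x, y) <> 0) (fun x => w (x, y)) = pi' y).

Definition kantorovich {X : Type} (d : X -> X -> R) (pi pi' : X -> R) : R :=
  minR (fun r => exists w, coupling pi pi' w /\
          r = finsum (fun p => w p <> 0) (fun p => w p * d (fst p) (snd p))).

Definition hausdorff {T : Type} (d : T -> T -> R) (X Y : T -> Prop) : R :=
  Rmax (supover X (fun x => infover Y (fun y => d x y)))
       (supover Y (fun y => infover X (fun x => d y x))).

(* PTSs over A_tau = option A  (None = tau), computations             *)

Section Comp.
Variables (A X : Type) (trans : X -> option A -> (X -> R) -> Prop).

(* a step  --a--> (via target distribution pi) x *)
Definition step := (option A * (X -> R) * X)%type.

Fixpoint is_comp (x : X) (c : list step) : Prop :=
  match c with
  | [] => True
  | (a, pi, y) :: c' => trans x a pi /\ supp pi y /\ is_comp y c'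
  end.

Fixpoint comp_prob (c : list step) : R :=
  match c with
  | [] => 1
  | (a, pi, y) :: c' => pi y * comp_prob c'
  end.

Definition comp_trace (c : list step) : list (option A) :=
  map (fun st => fst (fst st)) c.

Definition is_max_comp (x : X) (c : list step) : Prop :=
  is_comp x c /\
  ~ (exists ext, ext <> [] /\ is_comp x (c ++ ext)).

Definition image_finite (x : X) : Prop :=
  exists l : list (option A * (X -> R)), forall a pi, trans x a pi -> In (a, pi) l.

Definition succ (y x : X) : Prop := exists a pi, trans x a pi /\ supp pi y.

Definition finite_proc (x : X) : Prop := Acc succ x.

End Comp.

Record resolution (S A : Type) := Resolution {
  rZ : Type;
  rtrans : rZ -> option A -> (rZ -> R) -> Prop;
  rcorr : rZ -> S;
  rinit : rZ
}.

Definition is_resolution {S A : Type} (trans : S -> option A -> (S -> R) -> Prop)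
    (s : S) (Z : resolution S A) : Prop :=
  (forall z a pi, rtrans Z z a pi -> is_fdist pi) /\
  rcorr Z (rinit Z) = s /\
  (forall z a pi, rtrans Z z a pi -> ~ supp pi (rinit Z)) /\
  (forall z, z <> rinit Z ->
     exists z' a pi, z' <> z /\ rtrans Z z' a pi /\ supp pi z) /\
  (forall z a pi, rtrans Z z a pi ->
     exists pi', trans (rcorr Z z) a pi' /\
       forall z', supp pi z' -> pi z' = pi' (rcorr Z z')) /\
  (forall z a1 pi1 a2 pi2, rtrans Z z a1 pi1 -> rtrans Z z a2 pi2 ->
     a1 = a2 /\ pi1 = pi2).

Definition res {S A : Type} (trans : S -> option A -> (S -> R) -> Prop) (s : S)
  : resolution S A -> Prop := is_resolution trans s.

Definition TD {S A : Type} (Z : resolution S A) (alpha : list (option A)) : R :=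
  finsum (fun c => is_max_comp (@rtrans S A Z) (rinit Z) c /\
                   comp_trace c = alpha)
         (comp_prob (X:=rZ Z)).

Definition erase_tau {A : Type} (w : list (option A)) : list A :=
  flat_map (fun o => match o with Some a => [a] | None => [] end) w.

Definition weq {A : Type} (w1 w2 : list (option A)) : Prop :=
  erase_tau w1 = erase_tau w2.

Definition d_w {A : Type} (w1 w2 : list (option A)) : R :=
  if excluded_middle_informative (weq w1 w2) then 0 else 1.

Definition D_w {S A : Type} (Z1 Z2 : resolution S A) : R :=
  kantorovich d_w (TD Z1) (TD Z2).

Definition weak_trace_metric {S A : Type}
    (trans : S -> option A -> (S -> R) -> Prop) (s t : S) : R :=
  hausdorff (@D_w S A) (res trans s) (res trans t).

Inductive tformula (A : Type) : Type :=
| TTop : tformula A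
| TDia : option A -> tformula A -> tformula A.
Arguments TTop {A}.

Fixpoint tf_word {A : Type} (phi : tformula A) : list (option A) :=
  match phi with
  | TTop => []
  | TDia a phi' => a :: tf_word phi'
  end.

Definition depth {A : Type} (phi : tformula A) : nat := length (tf_word phi).

Fixpoint csat {A X : Type} (c : list (step A X)) (phi : tformula A) : Prop :=
  match phi with
  | TTop => True
  | TDia a phi' =>
      match c with
      | [] => False
      | (a', _, _) :: c' => a = a' /\ csat c' phi'
      end
  end.

(* trace distribution formulae = finitely supported distributions on
   trace formulae: (+)_{i} r_i Phi_i with r_i = psi Phi_i > 0 *)
Definition tdformula (A : Type) := tformula A -> R.

Definition sat {S A : Type} (trans : S -> option A -> (S -> R) -> Prop)
    (s : S) (psi : tdformula A) : Prop :=
  exists Z : resolution S A, res trans s Z /\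
    forall phi, 0 < psi phi ->
      finsum (fun c => is_max_comp (@rtrans S A Z) (rinit Z) c /\
                       csat c phi /\ length c = depth phi)
             (comp_prob (X:=rZ Z)) = psi phi.

Definition Lw {S A : Type} (trans : S -> option A -> (S -> R) -> Prop) (s : S)
  : tdformula A -> Prop :=
  fun psi => is_fdist psi /\ sat trans s psi.

Definition dform_w {A : Type} (phi1 phi2 : tformula A) : R :=
  d_w (tf_word phi1) (tf_word phi2).

Definition Dform_w {A : Type} (psi1 psi2 : tdformula A) : R :=
  kantorovich dform_w psi1 psi2.

Definition D_Lw {S A : Type} (trans : S -> option A -> (S -> R) -> Prop)
    (s t : S) : R :=
  hausdorff (@Dform_w A) (Lw trans s) (Lw trans t).

(** A resolution [Z] is the same thing, seen through the logic, as the trace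
    distribution formula [Phi |-> TD_Z(word Phi)]: trace formulae are in bijection with
    words over [A_tau], a computation satisfies [Phi_alpha] at depth [|alpha|] exactly
    when its trace is [alpha], and the maximal computations of a finite resolution have
    total probability one, so this is a distribution.  Conversely a formula satisfied by
    [s] through [Z] agrees with [TD_Z] on its support and hence everywhere.  Thus
    [L^w(s)] is the image of [res(s)] under this map, which carries [D_w] to [D^w]
    (Kantorovich liftings are invariant under relabelling by a bijection), and the
    Hausdorff liftings coincide. *)

From Stdlib Require Import Reals List Permutation FinFun Lra Classical ClassicalEpsilon FunctionalExtensionality PropExtensionality.
Import ListNotations.
Open Scope R_scope.

Definition filterb {X : Type} (P : X -> Prop) (l : list X) : list X :=
  filter (fun x => if excluded_middle_informative (P x) then true else false) l.

Lemma filterb_In {X} (P : X -> Prop) l x : In x (filterb P l) <-> In x l /\ P x.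
Proof.
  unfold filterb; rewrite filter_In.
  destruct (excluded_middle_informative (P x)); intuition congruence.
Qed.

Lemma filterb_NoDup {X} (P : X -> Prop) l : NoDup l -> NoDup (filterb P l).
Proof. apply NoDup_filter. Qed.

Definition dedup {X : Type} (l : list X) : list X :=
  nodup (fun x y : X => excluded_middle_informative (x = y)) l.

Lemma dedup_NoDup {X} (l : list X) : NoDup (dedup l).
Proof. apply NoDup_nodup. Qed.

Lemma dedup_In {X} (l : list X) x : In x (dedup l) <-> In x l.
Proof. apply nodup_In. Qed.

Section ListSums.
Context {X : Type}.
Implicit Types (l : list X) (f g : X -> R).

Lemma lsum_app l1 l2 f : lsum (l1 ++ l2) f = lsum l1 f + lsum l2 f.
Proof. induction l1; simpl; [ring | rewrite IHl1; ring]. Qed.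

Lemma lsum_perm l1 l2 f : Permutation l1 l2 -> lsum l1 f = lsum l2 f.
Proof. induction 1; simpl; try ring; congruence. Qed.

Lemma lsum_ext l f g : (forall x, In x l -> f x = g x) -> lsum l f = lsum l g.
Proof.
  induction l; simpl; intros H; auto.
  rewrite H, IHl by auto. reflexivity.
Qed.

Lemma lsum_eq0 l f : (forall x, In x l -> f x = 0) -> lsum l f = 0.
Proof.
  induction l; simpl; intros H; auto.
  rewrite H, IHl by auto. ring.
Qed.

Lemma lsum_ge0 l f : (forall x, In x l -> 0 <= f x) -> 0 <= lsum l f.
Proof.
  induction l; simpl; intros H; [lra|].
  pose proof (H a (or_introl eq_refl)). pose proof (IHl (fun x h => H x (or_intror h))). lra.
Qed.

Lemma lsum_plus l f g : lsum l (fun x => f x + g x) = lsum l f + lsum l g.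
Proof. induction l; simpl; [ring | rewrite IHl; ring]. Qed.

Lemma lsum_scal_l l (k : R) f : lsum l (fun x => k * f x) = k * lsum l f.
Proof. induction l; simpl; [ring | rewrite IHl; ring]. Qed.

Lemma lsum_map {Y} (u : Y -> X) (l : list Y) f : lsum (map u l) f = lsum l (fun y => f (u y)).
Proof. induction l; simpl; congruence. Qed.

Lemma lsum_filter_split (P : X -> Prop) l f :
  lsum l f = lsum (filterb P l) f + lsum (filterb (fun x => ~ P x) l) f.
Proof.
  induction l; simpl; [ring|]. unfold filterb in *; simpl.
  destruct (excluded_middle_informative (P a));
  destruct (excluded_middle_informative (~ P a)); try tauto; simpl; rewrite IHl; ring.
Qed.

Lemma lsum_incl_le l1 l2 f :
  NoDup l1 -> NoDup l2 -> incl l1 l2 -> (forall x, In x l2 -> 0 <= f x) ->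
  lsum l1 f <= lsum l2 f.
Proof.
  intros H1 H2 Hi Hp.
  rewrite (lsum_filter_split (fun x => In x l1) l2 f).
  rewrite (lsum_perm l1 (filterb (fun x => In x l1) l2)).
  - enough (0 <= lsum (filterb (fun x => ~ In x l1) l2) f) by lra.
    apply lsum_ge0; intros x Hx; apply filterb_In in Hx; apply Hp; tauto.
  - apply NoDup_Permutation; auto using filterb_NoDup.
    intro x; rewrite filterb_In; intuition.
Qed.

End ListSums.

Lemma lsum_indicator {X} (l : list X) (x : X) v :
  NoDup l -> In x l -> lsum l (fun b => if excluded_middle_informative (x = b) then v else 0) = v.
Proof.
  induction l as [|b l IH]; simpl; [tauto|]. intros Hn Hin. inversion Hn; subst.
  destruct (excluded_middle_informative (x = b)) as [<-|Hxb].
  - rewrite lsum_eq0. ring. intros y Hy.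
    destruct (excluded_middle_informative (x = y)); subst; tauto.
  - destruct Hin as [->|Hin]; [tauto|]. rewrite IH; auto; ring.
Qed.

Lemma lsum_fibres {X B} (g : X -> B) (f : X -> R) (L : list B) M :
  NoDup L -> (forall c, In c M -> In (g c) L) ->
  lsum L (fun b => lsum (filterb (fun c => g c = b) M) f) = lsum M f.
Proof.
  intros HL. induction M as [|c M IH]; intros HM; simpl.
  - apply lsum_eq0; auto.
  - rewrite <- IH by (intros; apply HM; simpl; auto).
    rewrite (lsum_ext L _ (fun b => (if excluded_middle_informative (g c = b) then f c else 0)
               + lsum (filterb (fun c => g c = b) M) f)).
    + rewrite lsum_plus, lsum_indicator; auto. apply HM; simpl; auto.
    + intros b _. unfold filterb; simpl.
      destruct (excluded_middle_informative (g c = b)); simpl; ring.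
Qed.


Lemma finsum_enum {X} (P : X -> Prop) f l :
  NoDup l -> (forall x, P x <-> In x l) -> finsum P f = lsum l f.
Proof.
  intros Hn Hi. unfold finsum.
  destruct (excluded_middle_informative (finset P)) as [H|H].
  - destruct (constructive_indefinite_description _ H) as [l' [Hn' Hi']]; simpl.
    apply lsum_perm, NoDup_Permutation; auto. intro x; rewrite <- Hi, Hi'; tauto.
  - exfalso; apply H; exists l; auto.
Qed.

Lemma finsum_superset {X} (P : X -> Prop) f L :
  NoDup L -> (forall x, P x -> In x L) -> (forall x, In x L -> ~ P x -> f x = 0) ->
  finsum P f = lsum L f.
Proof.
  intros Hn Hs Hz.
  rewrite (finsum_enum P f (filterb P L)).
  - rewrite (lsum_filter_split P L f), (lsum_eq0 (filterb (fun x => ~ P x) L)); [ring|].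
    intros x Hx; apply filterb_In in Hx; apply Hz; tauto.
  - apply filterb_NoDup; auto.
  - intro x; rewrite filterb_In; firstorder.
Qed.

Lemma fdist_support {X} (pi : X -> R) :
  is_fdist pi -> exists l, NoDup l /\ (forall x, supp pi x <-> In x l) /\ lsum l pi = 1.
Proof.
  intros [Hp [[l [Hn Hi]] Hs]]. exists l; split; [exact Hn | split].
  - intro x; rewrite <- Hi; unfold supp; pose proof (Hp x); split; intro; lra.
  - rewrite <- Hs; symmetry; apply finsum_enum; auto.
Qed.

Lemma pushforward_fdist {X B} (M : list X) (f : X -> R) (g : X -> B) (G : B -> R) :
  NoDup M -> (forall c, In c M -> 0 <= f c) -> lsum M f = 1 ->
  (forall b, G b = lsum (filterb (fun c => g c = b) M) f) -> is_fdist G.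
Proof.
  intros HM Hp H1 HG.
  set (L := dedup (map g M)).
  assert (HgL : forall c, In c M -> In (g c) L) by (intros; apply dedup_In, in_map; auto).
  assert (Hsub : forall b, G b <> 0 -> In b L).
  { intros b Hb. apply NNPP; intro Hn. apply Hb. rewrite HG. apply lsum_eq0.
    intros c Hc. apply filterb_In in Hc as [Hc <-]. exfalso; auto. }
  split; [|split].
  - intro b; rewrite HG; apply lsum_ge0; intros x Hx; apply filterb_In in Hx; apply Hp; tauto.
  - exists (filterb (fun b => G b <> 0) L); split; [apply filterb_NoDup, dedup_NoDup|].
    intro b; rewrite filterb_In; firstorder.
  - rewrite (finsum_superset _ _ L); [| apply dedup_NoDup | exact Hsub | intros x _ Hx; apply NNPP; auto].
    rewrite (lsum_ext L G _ (fun b _ => HG b)), lsum_fibres; auto; apply dedup_NoDup.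
Qed.

(* [q] has no mass left outside the support of [p]. *)
Lemma fdist_eq_on_supp {X} (p q : X -> R) :
  is_fdist p -> is_fdist q -> (forall x, supp p x -> q x = p x) -> q = p.
Proof.
  intros Hp Hq Hagree.
  destruct (fdist_support p Hp) as [Lp [HLpn [HLpi HLps]]].
  destruct (fdist_support q Hq) as [Lq [HLqn [HLqi HLqs]]].
  apply functional_extensionality; intro x.
  destruct (Rlt_dec 0 (p x)) as [Hx|Hx]; [apply Hagree; exact Hx|].
  assert (Ep : p x = 0) by (pose proof (proj1 Hp x); lra). rewrite Ep.
  apply NNPP; intro Hne.
  assert (Hqx : supp q x) by (pose proof (proj1 Hq x); unfold supp; lra).
  assert (Hle : lsum (x :: Lp) q <= lsum Lq q).
  { apply lsum_incl_le; auto.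
    - constructor; auto. rewrite <- HLpi; unfold supp; lra.
    - intros y [<-|Hy]; apply HLqi; auto.
      apply HLpi in Hy. unfold supp; rewrite Hagree; auto.
    - intros; apply (proj1 Hq). }
  simpl in Hle. rewrite (lsum_ext Lp q p) in Hle by (intros y Hy; apply Hagree, HLpi; auto).
  unfold supp in Hqx. lra.
Qed.

Section Reindex.
Context {X Y : Type}.
Variables (u : X -> Y) (v : Y -> X).
Hypotheses (Hvu : forall x, v (u x) = x) (Huv : forall y, u (v y) = y).

Lemma map_reindex_enum (P : X -> Prop) l :
  NoDup l -> (forall x, P x <-> In x l) ->
  NoDup (map u l) /\ forall y, P (v y) <-> In y (map u l).
Proof.
  intros Hn Hi. split.
  - apply Injective_map_NoDup; auto. intros a b E. rewrite <- (Hvu a), <- (Hvu b), E; auto.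
  - intro y. rewrite in_map_iff, Hi. split.
    + intros H; exists (v y); auto.
    + intros [x [<- Hx]]. rewrite Hvu; auto.
Qed.

Lemma finset_reindex (P : X -> Prop) : finset P -> finset (fun y => P (v y)).
Proof.
  intros [l [Hn Hi]]. exists (map u l). apply map_reindex_enum; auto.
Qed.

Lemma finsum_reindex (P : X -> Prop) f :
  finsum P f = finsum (fun y => P (v y)) (fun y => f (v y)).
Proof.
  destruct (classic (finset P)) as [[l [Hn Hi]] | Hn].
  - destruct (map_reindex_enum P l Hn Hi) as [Hn' Hi'].
    rewrite (finsum_enum P f l Hn Hi), (finsum_enum _ _ (map u l) Hn' Hi'), lsum_map.
    apply lsum_ext; intros; rewrite Hvu; auto.
  - unfold finsum. destruct (excluded_middle_informative (finset P)); [tauto|].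
    destruct (excluded_middle_informative (finset (fun y => P (v y)))) as [H|]; auto.
    exfalso; apply Hn. destruct H as [l [Hl Hi]]. exists (map v l); split.
    + apply Injective_map_NoDup; auto. intros a b E. rewrite <- (Huv a), <- (Huv b), E; auto.
    + intro x. rewrite in_map_iff. split.
      * intros H; exists (u x); rewrite Hvu; split; auto. apply Hi; rewrite Hvu; auto.
      * intros [y [<- Hy]]. apply Hi; auto.
Qed.

End Reindex.

Lemma coupling_cost_reindex {X Y} (u : X -> Y) (v : Y -> X)
  (Hvu : forall x, v (u x) = x) (Huv : forall y, u (v y) = y) d pi pi' w :
  coupling pi pi' w ->
  coupling (fun y => pi (v y)) (fun y => pi' (v y)) (fun q => w (v (fst q), v (snd q))) /\
  finsum (fun p => w p <> 0) (fun p => w p * d (fst p) (snd p)) =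
  finsum (fun q => w (v (fst q), v (snd q)) <> 0)
         (fun q => w (v (fst q), v (snd q)) * d (v (fst q)) (v (snd q))).
Proof.
  intros [H0 [Hf [H1 H2]]].
  set (U := fun p : X * X => (u (fst p), u (snd p))).
  set (V := fun q : Y * Y => (v (fst q), v (snd q))).
  assert (HVU : forall p, V (U p) = p) by (intros [a b]; unfold U, V; simpl; rewrite !Hvu; auto).
  assert (HUV : forall q, U (V q) = q) by (intros [a b]; unfold U, V; simpl; rewrite !Huv; auto).
  split; [split; [|split; [|split]]|].
  - intros; apply H0.
  - exact (finset_reindex U V HVU HUV _ Hf).
  - intro x. rewrite <- (H1 (v x)). symmetry.
    apply (finsum_reindex u v Hvu Huv (fun y0 => w (v x, y0) <> 0) (fun y0 => w (v x, y0))).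
  - intro y. rewrite <- (H2 (v y)). symmetry.
    apply (finsum_reindex u v Hvu Huv (fun y0 => w (y0, v y) <> 0) (fun y0 => w (y0, v y))).
  - exact (finsum_reindex U V HVU HUV _ _).
Qed.


Lemma kantorovich_reindex {X Y} (u : X -> Y) (v : Y -> X)
  (Hvu : forall x, v (u x) = x) (Huv : forall y, u (v y) = y) d pi pi' :
  kantorovich d pi pi' =
  kantorovich (fun a b => d (v a) (v b)) (fun y => pi (v y)) (fun y => pi' (v y)).
Proof.
  unfold kantorovich. f_equal. apply functional_extensionality; intro r.
  apply propositional_extensionality. split.
  - intros [w [Hw ->]].
    destruct (coupling_cost_reindex u v Hvu Huv d _ _ _ Hw) as [Hw' E].
    eexists; split; [exact Hw' | exact E].
  - intros [w [Hw ->]].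
    destruct (coupling_cost_reindex v u Huv Hvu (fun a b => d (v a) (v b)) _ _ _ Hw) as [Hw' E].
    assert (Hcancel : forall p : X -> R, (fun x => p (v (u x))) = p).
    { intro p; apply functional_extensionality; intro; rewrite Hvu; auto. }
    rewrite !Hcancel in Hw'.
    eexists; split; [exact Hw'|]. rewrite E. f_equal.
    apply functional_extensionality; intro q; rewrite !Hvu; auto.
Qed.

Section HausdorffImage.
Context {T T' : Type}.
Variable F : T -> T'.

Definition is_image (X : T -> Prop) (X' : T' -> Prop) : Prop :=
  forall x', X' x' <-> exists x, X x /\ F x = x'.

Lemma image_values (X : T -> Prop) (X' : T' -> Prop) (h : T' -> R) :
  is_image X X' ->
  (fun r => exists x', X' x' /\ r = h x') = (fun r => exists x, X x /\ r = h (F x)).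
Proof.
  intros HX. apply functional_extensionality; intro r.
  apply propositional_extensionality. split.
  - intros [x' [Hx' ->]]. destruct (proj1 (HX x') Hx') as [x [Hx <-]]. eauto.
  - intros [x [Hx ->]]. exists (F x); split; auto. apply HX; eauto.
Qed.

Lemma supover_image X X' h : is_image X X' -> supover X' h = supover X (fun x => h (F x)).
Proof. intro HX. unfold supover. rewrite (image_values X X' h HX). reflexivity. Qed.

Lemma infover_image X X' h : is_image X X' -> infover X' h = infover X (fun x => h (F x)).
Proof. intro HX. unfold infover. rewrite (image_values X X' h HX). reflexivity. Qed.

Lemma hausdorff_image (d : T -> T -> R) (d' : T' -> T' -> R) X Y X' Y' :
  (forall a b, d' (F a) (F b) = d a b) -> is_image X X' -> is_image Y Y' ->
  hausdorff d' X' Y' = hausdorff d X Y.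
Proof.
  intros Hd HX HY. unfold hausdorff.
  rewrite (supover_image X X'), (supover_image Y Y'); auto.
  f_equal; f_equal; apply functional_extensionality; intro x.
  - rewrite (infover_image Y Y'); auto.
    f_equal; apply functional_extensionality; intro; apply Hd.
  - rewrite (infover_image X X'); auto.
    f_equal; apply functional_extensionality; intro; apply Hd.
Qed.

End HausdorffImage.

Section MaximalComputations.
Context {A X : Type}.
Variable tr : X -> option A -> (X -> R) -> Prop.
Hypothesis Hfd : forall x a pi, tr x a pi -> is_fdist pi.
Hypothesis Hdet : forall x a1 p1 a2 p2, tr x a1 p1 -> tr x a2 p2 -> a1 = a2 /\ p1 = p2.

Lemma comp_prob_ge0 x c : is_comp tr x c -> 0 <= comp_prob c.
Proof.
  revert x; induction c as [|[[a pi] y] c IH]; intros x Hc; simpl; [lra|].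
  destruct Hc as [Ht [_ Hc]].
  apply Rmult_le_pos; [apply (Hfd _ _ _ Ht) | exact (IH y Hc)].
Qed.

Lemma is_max_comp_stuck x c :
  ~ (exists a pi, tr x a pi) -> is_max_comp tr x c <-> c = [].
Proof.
  intros Hno. split.
  - intros [Hc _]. destruct c as [|[[a pi] y] c]; auto.
    exfalso; apply Hno; exists a, pi; apply Hc.
  - intros ->. split; [exact I|]. intros [[|[[a pi] y] e] [Hne Hext]]; [congruence|].
    apply Hno; exists a, pi; apply Hext.
Qed.

Lemma is_max_comp_cons x a pi c : tr x a pi ->
  is_max_comp tr x c <->
  exists y c', supp pi y /\ c = (a, pi, y) :: c' /\ is_max_comp tr y c'.
Proof.
  intros Ht. split.
  - intros [Hc Hnm]. destruct c as [|[[a' pi'] y] c'].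
    + exfalso. destruct (fdist_support pi (Hfd _ _ _ Ht)) as [[|y0 l] [_ [Hi Hs]]]; [simpl in Hs; lra|].
      apply Hnm. exists [(a, pi, y0)]. split; [congruence|]. simpl.
      repeat split; auto. apply Hi; simpl; auto.
    + destruct Hc as [Ht' [Hsy Hc']]. destruct (Hdet _ _ _ _ _ Ht Ht') as [<- <-].
      exists y, c'. repeat split; auto.
      intros [ext [Hne Hext]]. apply Hnm. exists ext; split; auto. simpl; auto.
  - intros [y [c' [Hy [-> [Hc' Hnm]]]]]. split.
    + simpl. auto.
    + intros [ext [Hne [_ [_ Hext]]]]. apply Hnm. exists ext; auto.
Qed.

Lemma branches_enum (a : option A) (pi : X -> R) (P : X -> list (step A X) -> Prop) (Y : list X) :
  NoDup Y ->
  (forall y, In y Y -> exists M, NoDup M /\ (forall c, P y c <-> In c M) /\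
                          lsum M (@comp_prob A X) = 1) ->
  exists N, NoDup N /\
    (forall c, (exists y c', In y Y /\ c = (a, pi, y) :: c' /\ P y c') <-> In c N) /\
    lsum N (@comp_prob A X) = lsum Y pi.
Proof.
  induction Y as [|y Y IH]; intros Hn HM.
  - exists []; split; [constructor|]. split; [|reflexivity].
    intro c; simpl; split; [intros [? [? [[] _]]] | tauto].
  - inversion Hn as [|? ? Hy HnY]; subst.
    destruct IH as [N [HNn [HNi HNs]]]; auto. { intros z Hz; apply HM; simpl; auto. }
    destruct (HM y) as [My [HMn [HMi HMs]]]; [simpl; auto|].
    exists (map (cons (a, pi, y)) My ++ N). split; [|split].
    + apply NoDup_app; auto.
      * apply Injective_map_NoDup; auto. intros c1 c2 E; injection E; auto.
      * intros c Hc1 Hc2. apply in_map_iff in Hc1 as [c' [<- _]].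
        apply HNi in Hc2 as [y' [c'' [Hy' [E _]]]]. injection E; intros; subst; auto.
    + intro c. rewrite in_app_iff, <- HNi, in_map_iff. split.
      * intros [y0 [c' [[<-|Hy0] [-> Hm]]]].
        -- left. exists c'; split; auto. apply HMi; auto.
        -- right. exists y0, c'; auto.
      * intros [[c' [<- Hc']] | [y0 [c' [Hy0 [-> Hm]]]]].
        -- exists y, c'; split; [simpl; auto|]. split; auto. apply HMi; auto.
        -- exists y0, c'; simpl; auto.
    + rewrite lsum_app, lsum_map, HNs.
      rewrite (lsum_ext My _ (fun c => pi y * comp_prob c)) by reflexivity.
      rewrite lsum_scal_l, HMs. simpl. ring.
Qed.

Lemma max_comps_total x : Acc (succ tr) x ->
  exists M, NoDup M /\ (forall c, is_max_comp tr x c <-> In c M) /\ lsum M (@comp_prob A X) = 1.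
Proof.
  induction 1 as [x _ IH].
  destruct (classic (exists a pi, tr x a pi)) as [[a [pi Ht]] | Hno].
  - destruct (fdist_support pi (Hfd _ _ _ Ht)) as [Y [HYn [HYi HYs]]].
    destruct (branches_enum a pi (is_max_comp tr) Y HYn) as [N [HNn [HNi HNs]]].
    { intros y Hy. apply IH. exists a, pi; split; auto. apply HYi; auto. }
    exists N. split; [exact HNn|]. split; [|etransitivity; [exact HNs | exact HYs]].
    intro c. rewrite (is_max_comp_cons x a pi c Ht), <- HNi.
    split; intros [y [c' H]]; exists y, c'; rewrite HYi in *; tauto.
  - exists [[]]. split; [repeat constructor; simpl; tauto|]. split; [|simpl; ring].
    intro c. rewrite (is_max_comp_stuck x c Hno). simpl; intuition.
Qed.

End MaximalComputations.

Definition unword {A} (l : list (option A)) : tformula A := fold_right (@TDia A) TTop l.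

Lemma tf_word_unword {A} (l : list (option A)) : tf_word (unword l) = l.
Proof. induction l; simpl; congruence. Qed.

Lemma unword_tf_word {A} (phi : tformula A) : unword (tf_word phi) = phi.
Proof. induction phi; simpl; congruence. Qed.

Lemma csat_depth_iff_trace {A X} (phi : tformula A) (c : list (step A X)) :
  (csat c phi /\ length c = depth phi) <-> comp_trace c = tf_word phi.
Proof.
  unfold depth, comp_trace. revert c.
  induction phi as [|a phi IH]; intros [|[[a' pi] y] c]; simpl;
    try (split; intuition congruence).
  specialize (IH c). split.
  - intros [[-> H] E]. injection E; intros E'. f_equal. apply IH; auto.
  - intros E; injection E; intros E1 E2; subst. apply IH in E1. intuition.
Qed.

Definition td_formula {S A} (Z : resolution S A) : tdformula A :=
  fun phi => TD Z (tf_word phi).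

Lemma Dform_w_td_formula {S A} (Z1 Z2 : resolution S A) :
  Dform_w (td_formula Z1) (td_formula Z2) = D_w Z1 Z2.
Proof.
  unfold Dform_w, D_w, td_formula, dform_w.
  symmetry. apply (kantorovich_reindex unword tf_word); [apply tf_word_unword | apply unword_tf_word].
Qed.

Lemma sat_finsum_td_formula {S A} (Z : resolution S A) phi :
  finsum (fun c => is_max_comp (@rtrans S A Z) (rinit Z) c /\
                   csat c phi /\ length c = depth phi) (comp_prob (X:=rZ Z)) =
  td_formula Z phi.
Proof.
  unfold td_formula, TD. f_equal. apply functional_extensionality; intro c.
  apply propositional_extensionality. rewrite <- csat_depth_iff_trace. tauto.
Qed.

Section Resolutions.
Variables (S A : Type) (trans : S -> option A -> (S -> R) -> Prop).
Hypothesis Hfin : forall s, finite_proc trans s.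

Lemma resolution_acc s Z : res trans s Z -> forall z, Acc (succ (rtrans Z)) z.
Proof.
  intros [_ [_ [_ [_ [Hmatch _]]]]].
  assert (Hcorr : forall s0, Acc (succ trans) s0 ->
                  forall z, rcorr Z z = s0 -> Acc (succ (rtrans Z)) z).
  { induction 1 as [s0 _ IH]. intros z <-. constructor.
    intros y [a [pi [Ht Hs]]]. destruct (Hmatch _ _ _ Ht) as [pi' [Ht' Hpi]].
    apply (IH (rcorr Z y)); auto. exists a, pi'. split; auto.
    unfold supp in *. rewrite <- Hpi; auto. }
  intro z; exact (Hcorr _ (Hfin (rcorr Z z)) z eq_refl).
Qed.

Lemma td_formula_fdist s Z : res trans s Z -> is_fdist (td_formula Z).
Proof.
  intros HR. pose proof HR as [Hfd [_ [_ [_ [_ Hdet]]]]].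
  destruct (max_comps_total (rtrans Z) Hfd Hdet _ (resolution_acc s Z HR (rinit Z)))
    as [M [HMn [HMi HMs]]].
  apply (pushforward_fdist M (@comp_prob A (rZ Z)) (fun c => unword (comp_trace c))); auto.
  - intros c Hc. apply (comp_prob_ge0 (rtrans Z) Hfd (rinit Z)), HMi, Hc.
  - intro phi. unfold td_formula, TD. apply finsum_enum; [apply filterb_NoDup; auto|].
    intro c. rewrite filterb_In, <- HMi.
    rewrite <- (unword_tf_word phi) at 2.
    split; intros [H1 H2]; split; auto.
    + rewrite H2; auto.
    + rewrite <- (tf_word_unword (comp_trace c)), H2, tf_word_unword; auto.
Qed.

Lemma Lw_is_image s : is_image td_formula (res trans s) (Lw trans s).
Proof.
  intro psi. split.
  - intros [Hpsi [Z [HR Hsat]]]. exists Z; split; auto.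
    apply fdist_eq_on_supp; auto; [exact (td_formula_fdist s Z HR)|].
    intros phi Hphi. rewrite <- sat_finsum_td_formula. apply Hsat; auto.
  - intros [Z [HR <-]]. split; [exact (td_formula_fdist s Z HR)|].
    exists Z; split; auto. intros phi _. apply sat_finsum_td_formula.
Qed.

End Resolutions.

Theorem theorem18 (S A : Type) (trans : S -> option A -> (S -> R) -> Prop)
  (Hdist : forall s a pi, trans s a pi -> is_fdist pi)
  (Himg : forall s, image_finite trans s)
  (Hfin : forall s, finite_proc trans s)
  (s t : S) :
  weak_trace_metric trans s t = D_Lw trans s t.
Proof.
  unfold weak_trace_metric, D_Lw. symmetry.
  apply (hausdorff_image td_formula).
  - apply Dform_w_td_formula.
  - apply (Lw_is_image S A trans Hfin).
  - apply (Lw_is_image S A trans Hfin).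
Qed.
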